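(* Let $n\ge1$. There are constants $C>0$ and $\delta_0>0$ depending only on $n$ such that for every $0<\delta<\delta_0$: (a) a complex symmetric $n\times n$ matrix $B$ lies in $M_\delta^+$ if and only if $\langle Bx,x\rangle\in N_\delta^+$ for every nonzero $x\in\mathbb R^n$; (b) if $h\in E_\delta$ and $0\ne x\in\mathbb R^n$, then $h^Tx\in V_{C\delta}$; (c) if $z\in V_\delta$, $z\ne0$, then $\langle z,z\rangle\in N_{C\delta}^+$; (d) if $h\in E_\delta$, then $hh^T\in M_{C\delta}^+$; (e) if $A\in M_\delta$ and $|B-I|<\delta$, then $AB\in M_{C\delta}$ and $BA\in M_{C\delta}$; (f) if $A\in M_\delta$ and $B\in SO(n,\mathbb R)$, then $AB\in M_{C\delta}$ and $BA\in M_{C\delta}$.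
   Context: $\langle u,v\rangle=\sum_j u_jv_j$ (bilinear). $|\cdot|$ is the Euclidean norm on vectors and the operator norm on matrices. Writing $z=x+iy$ with $x,y$ real: $N_\delta^+=\{z\in\mathbb C:|y|<\delta x\}$; $V_\delta=\{z\in\mathbb C^n:|y|<\delta|x|\}$; $M_\delta=\{z\in{\rm Mat}(n,\mathbb C):|y|<\delta|x|\}$; $M_\delta^+=\{z\in{\rm Mat}(n,\mathbb C): z^T=z,\ \delta x+y \text{ and } \delta x-y \text{ positive definite}\}$. $E_\delta=\{gp: g\in{\rm Mat}(n,\mathbb R),\ \det g>0,\ p\in GL(n,\mathbb C),\ |p-I|<\delta\}$. The paper's convention is that writing ''$w\in V_\delta$'' in a conclusion means $w\in V_\epsilon$ with $\epsilon=O(\delta)$; this has been made explicit via the constant $C$. *)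

From HB Require Import structures.
From mathcomp Require Import all_boot all_order all_algebra.
From mathcomp Require Import complex.
From mathcomp Require Import classical_sets reals.
Set Implicit Arguments. Unset Strict Implicit. Unset Printing Implicit Defensive.
Import Order.TTheory GRing.Theory Num.Theory.
Local Open Scope ring_scope.
Local Open Scope classical_set_scope.

Section Defs.
Variable R : realType.
Local Notation C := (complex R).

Definition cR (r : R) : C := Complex r 0.
Definition cmx m n (X : 'M[R]_(m, n)) : 'M[C]_(m, n) := map_mx cR X.
Definition Remx m n (Z : 'M[C]_(m, n)) : 'M[R]_(m, n) := map_mx (@complex.Re R) Z.
Definition Immx m n (Z : 'M[C]_(m, n)) : 'M[R]_(m, n) := map_mx (@complex.Im R) Z.

Definition rvnorm n (v : 'cV[R]_n) : R := Num.sqrt (\sum_i v i 0 ^+ 2).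
Definition cvnorm n (v : 'cV[C]_n) : R :=
  Num.sqrt (\sum_i (complex.Re (v i 0) ^+ 2 + complex.Im (v i 0) ^+ 2)).

Definition ropnorm m n (A : 'M[R]_(m, n)) : R :=
  sup [set rvnorm (A *m v) | v in [set v : 'cV[R]_n | rvnorm v = 1]].
Definition copnorm m n (A : 'M[C]_(m, n)) : R :=
  sup [set cvnorm (A *m v) | v in [set v : 'cV[C]_n | cvnorm v = 1]].

Definition bil n (u v : 'cV[C]_n) : C := \sum_j u j 0 * v j 0.

Definition Nplus (d : R) : set C := [set z | `|complex.Im z| < d * complex.Re z].
Definition Vd n (d : R) : set 'cV[C]_n :=
  [set z | rvnorm (Immx z) < d * rvnorm (Remx z)].
Definition Md n (d : R) : set 'M[C]_n :=
  [set z | ropnorm (Immx z) < d * ropnorm (Remx z)].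

Definition posdef n (A : 'M[R]_n) : Prop :=
  forall v : 'cV[R]_n, v != 0 -> 0 < (v^T *m A *m v) 0 0.

Definition Mplus n (d : R) : set 'M[C]_n :=
  [set z | z^T = z /\ posdef (d *: Remx z + Immx z)
                  /\ posdef (d *: Remx z - Immx z)].

Definition Ed n (d : R) : set 'M[C]_n :=
  [set h | exists (g : 'M[R]_n) (p : 'M[C]_n),
      [/\ 0 < \det g, p \in unitmx, copnorm (p - 1%:M) < d & h = cmx g *m p]].

Definition SOn n : set 'M[R]_n := [set B | B^T *m B = 1%:M /\ \det B = 1].

End Defs.

From HB Require Import structures.
From mathcomp Require Import all_boot all_order all_algebra.
From mathcomp Require Import complex.
From mathcomp Require Import classical_sets reals ring lra.
Import Order.TTheory GRing.Theory Num.Theory.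
Local Open Scope ring_scope.
Set Implicit Arguments. Unset Strict Implicit.

(** Split every complex matrix as [Z = X + iY]; the real operator norms of [X]
   and [Y] are at most the complex operator norm of [Z], and all six estimates
   reduce to real linear algebra.  For real [x], [<Bx, x>] has real part
   [x^T X x] and imaginary part [x^T Y x], which is (a).  For [z = a + ib],
   [<z, z> = |a|^2 - |b|^2 + 2i a.b], so Cauchy-Schwarz gives (c).  If
   [h = g p] then [h^T x = p^T w] with [w = g^T x] real and nonzero, and
   [|p - I| < d] moves [w] by at most [d |w|], giving (b); (d) follows from
   (a), (b) and (c) because [<h h^T x, x> = <h^T x, h^T x>].  (e) is the same
   perturbation argument at the level of matrices, and in (f) orthogonal
   factors preserve the real operator norms.  [C = 8] and [d0 = 1/4] work. *)

Section EuclideanNorm.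
Variable R : realType.

Lemma cauchy_schwarz (I : finType) (f g : I -> R) :
  (\sum_i f i * g i) ^+ 2 <= (\sum_i f i ^+ 2) * (\sum_i g i ^+ 2).
Proof.
set F := \sum_i f i ^+ 2; set S := \sum_i f i * g i; set G := \sum_i g i ^+ 2.
have F_ge0 : 0 <= F by rewrite sumr_ge0 // => i _; rewrite sqr_ge0.
have discr_ge0 t : 0 <= t ^+ 2 * F - 2 * t * S + G.
  have -> : t ^+ 2 * F - 2 * t * S + G = \sum_i (t * f i - g i) ^+ 2.
    rewrite (eq_bigr (fun i => t ^+ 2 * f i ^+ 2 - 2 * t * (f i * g i) + g i ^+ 2));
      last by move=> i _; ring.
    by rewrite big_split sumrB /= -!mulr_sumr.
  by rewrite sumr_ge0 // => i _; rewrite sqr_ge0.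
have [F_gt0 | F_le0] := ltrP 0 F.
  have := discr_ge0 (S / F); set u := S / F.
  have -> : S = u * F by rewrite divfK ?gt_eqF.
  nra.
have F0 : F = 0 by apply/eqP; rewrite eq_le F_le0 F_ge0.
have f0 i : f i = 0.
  apply/eqP; rewrite -sqrf_eq0; apply/eqP.
  exact: (psumr_eq0P (fun i _ => sqr_ge0 (f i)) F0).
by rewrite /S F0 mul0r big1 ?expr0n // => i _; rewrite f0 mul0r.
Qed.

Definition dotr n (u v : 'cV[R]_n) : R := \sum_i u i 0 * v i 0.

Lemma rvnorm_ge0 n (v : 'cV[R]_n) : 0 <= rvnorm v.
Proof. exact: sqrtr_ge0. Qed.

Lemma sqr_rvnorm n (v : 'cV[R]_n) : rvnorm v ^+ 2 = \sum_i v i 0 ^+ 2.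
Proof. by rewrite sqr_sqrtr // sumr_ge0 // => i _; rewrite sqr_ge0. Qed.

Lemma sqr_rvnorm_dotr n (v : 'cV[R]_n) : rvnorm v ^+ 2 = dotr v v.
Proof. by rewrite sqr_rvnorm; apply: eq_bigr => i _; rewrite expr2. Qed.

Lemma normr_dotr_le n (u v : 'cV[R]_n) : `|dotr u v| <= rvnorm u * rvnorm v.
Proof.
rewrite -sqrtr_sqr -sqrtrM; last by rewrite sumr_ge0 // => i _; rewrite sqr_ge0.
exact/ler_wsqrtr/cauchy_schwarz.
Qed.

Lemma rvnorm_eq0 n (v : 'cV[R]_n) : (rvnorm v == 0) = (v == 0).
Proof.
apply/eqP/eqP => [v0 | ->].
  have : \sum_i v i 0 ^+ 2 = 0 by rewrite -sqr_rvnorm v0 expr0n.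
  move/(psumr_eq0P (fun i _ => sqr_ge0 (v i 0))) => v2_0.
  by apply/matrixP => i j; rewrite ord1 mxE; apply/eqP; rewrite -sqrf_eq0 v2_0.
by rewrite /rvnorm big1 ?sqrtr0 // => i _; rewrite mxE expr0n.
Qed.

Lemma rvnorm_gt0 n (v : 'cV[R]_n) : (0 < rvnorm v) = (v != 0).
Proof. by rewrite lt_def rvnorm_ge0 rvnorm_eq0 andbT. Qed.

Lemma rvnorm0 n : rvnorm (0 : 'cV[R]_n) = 0.
Proof. by apply/eqP; rewrite rvnorm_eq0. Qed.

Lemma rvnormZ n a (v : 'cV[R]_n) : rvnorm (a *: v) = `|a| * rvnorm v.
Proof.
rewrite /rvnorm -sqrtr_sqr -sqrtrM ?sqr_ge0 // mulr_sumr.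
by congr Num.sqrt; apply: eq_bigr => i _; rewrite mxE; ring.
Qed.

Lemma rvnormN n (v : 'cV[R]_n) : rvnorm (- v) = rvnorm v.
Proof. by rewrite -scaleN1r rvnormZ normrN normr1 mul1r. Qed.

Lemma rvnormD n (u v : 'cV[R]_n) : rvnorm (u + v) <= rvnorm u + rvnorm v.
Proof.
rewrite -(ler_pXn2r (n := 2)) ?nnegrE ?addr_ge0 ?rvnorm_ge0 // sqr_rvnorm_dotr.
have -> : dotr (u + v) (u + v) = dotr u u + 2 * dotr u v + dotr v v.
  rewrite /dotr mulr_sumr -!big_split /=; apply: eq_bigr => i _; rewrite !mxE; ring.
rewrite -!sqr_rvnorm_dotr.
have := normr_dotr_le u v; have := ler_norm (dotr u v); nra.
Qed.

Lemma lerB_rvnormD n (u v : 'cV[R]_n) : rvnorm u - rvnorm v <= rvnorm (u + v).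
Proof. have := rvnormD (u + v) (- v); rewrite addrK rvnormN; lra. Qed.

Lemma rvnorm_normalize n (v : 'cV[R]_n) : v != 0 -> rvnorm ((rvnorm v)^-1 *: v) = 1.
Proof.
rewrite -rvnorm_gt0 => v_gt0.
by rewrite rvnormZ ger0_norm ?invr_ge0 ?rvnorm_ge0 // mulVf ?gt_eqF.
Qed.

Lemma dotr_trmx m n (M : 'M[R]_(m, n)) u w : dotr (M^T *m u) w = dotr u (M *m w).
Proof.
rewrite /dotr; under eq_bigr => i _ do rewrite mxE mulr_suml.
under [RHS]eq_bigr => i _ do rewrite mxE mulr_sumr.
by rewrite exchange_big; apply: eq_bigr => i _; apply: eq_bigr => j _; rewrite mxE; ring.
Qed.

Lemma rvnorm_orthogonal m n (M : 'M[R]_(m, n)) v :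
  M^T *m M = 1%:M -> rvnorm (M *m v) = rvnorm v.
Proof.
move=> MTM; apply/eqP; rewrite -(eqrXn2 (n := 2)) ?rvnorm_ge0 // !sqr_rvnorm_dotr.
by rewrite -[M in dotr (M *m v)]trmxK dotr_trmx mulmxA MTM mul1mx.
Qed.

End EuclideanNorm.

Section OperatorNorm.
Variables (R : realType) (m n : nat).
Hypothesis n_gt0 : (0 < n)%N.
Implicit Types (A B : 'M[R]_(m, n)) (v : 'cV[R]_n).

Lemma rvnorm_mulmx_le_frobenius A v :
  rvnorm (A *m v) <= Num.sqrt (\sum_i \sum_j A i j ^+ 2) * rvnorm v.
Proof.
have sum_ge0 : 0 <= \sum_i \sum_j A i j ^+ 2.
  by rewrite !sumr_ge0 // => i _; rewrite sumr_ge0 // => j _; rewrite sqr_ge0.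
rewrite -(ler_pXn2r (n := 2)) ?nnegrE ?mulr_ge0 ?sqrtr_ge0 ?rvnorm_ge0 //.
rewrite exprMn !sqr_rvnorm sqr_sqrtr // mulr_suml; apply: ler_sum => i _.
by rewrite mxE; exact: (cauchy_schwarz (A i) (fun j => v j 0)).
Qed.

Lemma ropnorm_ub A v : rvnorm (A *m v) <= ropnorm A * rvnorm v.
Proof.
have [->|v_neq0] := eqVneq v 0; first by rewrite mulmx0 !rvnorm0 mulr0.
have v_gt0 : 0 < rvnorm v by rewrite rvnorm_gt0.
suff : rvnorm (A *m ((rvnorm v)^-1 *: v)) <= ropnorm A.
  by rewrite -scalemxAr rvnormZ ger0_norm ?invr_ge0 ?rvnorm_ge0 // mulrC ler_pdivrMr.
apply: ub_le_sup; last by exists ((rvnorm v)^-1 *: v); rewrite //= rvnorm_normalize.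
exists (Num.sqrt (\sum_i \sum_j A i j ^+ 2)) => _ [w /= w1 <-].
by rewrite -[leRHS]mulr1 -w1 rvnorm_mulmx_le_frobenius.
Qed.

Lemma exists_rvnorm1 : exists v : 'cV[R]_n, rvnorm v = 1.
Proof.
exists ((rvnorm (const_mx 1 : 'cV[R]_n))^-1 *: const_mx 1); apply: rvnorm_normalize.
by apply/eqP => /matrixP /(_ (Ordinal n_gt0) 0); rewrite !mxE => /eqP; rewrite oner_eq0.
Qed.

Lemma ropnorm_le A K : (forall v, rvnorm (A *m v) <= K * rvnorm v) -> ropnorm A <= K.
Proof.
move=> AK; have [u u1] := exists_rvnorm1.
apply: ge_sup; first by exists (rvnorm (A *m u)), u.
by move=> _ [w /= w1 <-]; rewrite -[leRHS]mulr1 -w1.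
Qed.

Lemma ropnorm_ge0 A : 0 <= ropnorm A.
Proof.
have [u u1] := exists_rvnorm1.
by have := ropnorm_ub A u; rewrite u1 mulr1; apply: le_trans; rewrite rvnorm_ge0.
Qed.

Lemma ropnormD A B : ropnorm (A + B) <= ropnorm A + ropnorm B.
Proof.
apply: ropnorm_le => v; rewrite mulmxDl mulrDl.
by apply: le_trans (rvnormD _ _) _; rewrite lerD ?ropnorm_ub.
Qed.

Lemma ropnormN A : ropnorm (- A) = ropnorm A.
Proof.
suff ropnormN_le B : ropnorm (- B) <= ropnorm B.
  by apply/eqP; rewrite eq_le ropnormN_le -{1}[A]opprK ropnormN_le.
by apply: ropnorm_le => v; rewrite mulNmx rvnormN ropnorm_ub.
Qed.

Lemma ropnorm_trmx_ub A (u : 'cV[R]_m) : rvnorm (A^T *m u) <= ropnorm A * rvnorm u.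
Proof.
set t := A^T *m u.
have [t0 | t_neq0] := eqVneq t 0.
  by rewrite t0 rvnorm0 mulr_ge0 ?ropnorm_ge0 ?rvnorm_ge0.
have t_gt0 : 0 < rvnorm t by rewrite rvnorm_gt0.
rewrite -(ler_pM2l t_gt0) -expr2 sqr_rvnorm_dotr {1}/t dotr_trmx.
apply: le_trans (ler_norm _) _; apply: le_trans (normr_dotr_le _ _) _.
have := ropnorm_ub A t; have := rvnorm_ge0 u; nra.
Qed.

Lemma ropnorm_mulmx_orthogonal A (M : 'M[R]_n) :
  M^T *m M = 1%:M -> ropnorm (A *m M) = ropnorm A.
Proof.
move=> MTM; have MMT : M *m M^T = 1%:M by apply: mulmx1C.
apply/eqP; rewrite eq_le; apply/andP; split; apply: ropnorm_le => v.
  by rewrite -mulmxA -(rvnorm_orthogonal v MTM) ropnorm_ub.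
have -> : A *m v = A *m M *m (M^T *m v) by rewrite -mulmxA (mulmxA M) MMT mul1mx.
by rewrite -(@rvnorm_orthogonal _ _ _ M^T) ?trmxK // ropnorm_ub.
Qed.

Lemma ropnorm_orthogonal_mulmx (M : 'M[R]_m) A :
  M^T *m M = 1%:M -> ropnorm (M *m A) = ropnorm A.
Proof.
move=> MTM; apply/eqP; rewrite eq_le; apply/andP; split; apply: ropnorm_le => v.
  by rewrite -mulmxA rvnorm_orthogonal // ropnorm_ub.
by rewrite -(rvnorm_orthogonal (A *m v) MTM) mulmxA ropnorm_ub.
Qed.

End OperatorNorm.

Section RealImaginaryParts.
Variable R : realType.
Local Notation C := (complex R).

Lemma ReM (a b : C) :
  complex.Re (a * b) = complex.Re a * complex.Re b - complex.Im a * complex.Im b.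
Proof. by case: a => ? ?; case: b. Qed.

Lemma ImM (a b : C) :
  complex.Im (a * b) = complex.Re a * complex.Im b + complex.Im a * complex.Re b.
Proof. by case: a => ? ?; case: b. Qed.

Lemma Remx_mulmx m n p (A : 'M[C]_(m, n)) (B : 'M[C]_(n, p)) :
  Remx (A *m B) = Remx A *m Remx B - Immx A *m Immx B.
Proof.
apply/matrixP => i j; rewrite !mxE raddf_sum /= -sumrB.
by apply: eq_bigr => k _; rewrite ReM !mxE.
Qed.

Lemma Immx_mulmx m n p (A : 'M[C]_(m, n)) (B : 'M[C]_(n, p)) :
  Immx (A *m B) = Remx A *m Immx B + Immx A *m Remx B.
Proof.
apply/matrixP => i j; rewrite !mxE raddf_sum /= -big_split.
by apply: eq_bigr => k _; rewrite ImM !mxE.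
Qed.

Lemma RemxD m n (A B : 'M[C]_(m, n)) : Remx (A + B) = Remx A + Remx B.
Proof. exact: map_mxD. Qed.

Lemma ImmxD m n (A B : 'M[C]_(m, n)) : Immx (A + B) = Immx A + Immx B.
Proof. exact: map_mxD. Qed.

Lemma Remx_trmx m n (A : 'M[C]_(m, n)) : Remx A^T = (Remx A)^T.
Proof. exact/esym/map_trmx. Qed.

Lemma Immx_trmx m n (A : 'M[C]_(m, n)) : Immx A^T = (Immx A)^T.
Proof. exact/esym/map_trmx. Qed.

Lemma Remx1 n : Remx (1%:M : 'M[C]_n) = 1%:M.
Proof. by apply/matrixP => i j; rewrite !mxE; case: (i == j). Qed.

Lemma Immx1 n : Immx (1%:M : 'M[C]_n) = 0.
Proof. by apply/matrixP => i j; rewrite !mxE; case: (i == j). Qed.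

Lemma RemxZ m n (a : R) (A : 'M[C]_(m, n)) : Remx (cR a *: A) = a *: Remx A.
Proof. by apply/matrixP => i j; rewrite !mxE; case: (A i j) => ? ? /=; ring. Qed.

Lemma ImmxZ m n (a : R) (A : 'M[C]_(m, n)) : Immx (cR a *: A) = a *: Immx A.
Proof. by apply/matrixP => i j; rewrite !mxE; case: (A i j) => ? ? /=; ring. Qed.

Lemma Remx_cmx m n (X : 'M[R]_(m, n)) : Remx (cmx X) = X.
Proof. by apply/matrixP => i j; rewrite !mxE. Qed.

Lemma Immx_cmx m n (X : 'M[R]_(m, n)) : Immx (cmx X) = 0.
Proof. by apply/matrixP => i j; rewrite !mxE. Qed.

Lemma cmxE m n (X : 'M[R]_(m, n)) : cmx X = map_mx (real_complex R) X.
Proof. by []. Qed.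

Lemma cmx_mulmx m n p (X : 'M[R]_(m, n)) (Y : 'M[R]_(n, p)) :
  cmx (X *m Y) = cmx X *m cmx Y.
Proof. by rewrite !cmxE map_mxM. Qed.

Lemma cmx_trmx m n (X : 'M[R]_(m, n)) : cmx X^T = (cmx X)^T.
Proof. exact/esym/map_trmx. Qed.

Lemma Remx_mulmx_cmx m n p (A : 'M[C]_(m, n)) (X : 'M[R]_(n, p)) :
  Remx (A *m cmx X) = Remx A *m X.
Proof. by rewrite Remx_mulmx Remx_cmx Immx_cmx mulmx0 subr0. Qed.

Lemma Immx_mulmx_cmx m n p (A : 'M[C]_(m, n)) (X : 'M[R]_(n, p)) :
  Immx (A *m cmx X) = Immx A *m X.
Proof. by rewrite Immx_mulmx Remx_cmx Immx_cmx mulmx0 add0r. Qed.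

Lemma Remx_cmx_mulmx m n p (X : 'M[R]_(m, n)) (A : 'M[C]_(n, p)) :
  Remx (cmx X *m A) = X *m Remx A.
Proof. by rewrite Remx_mulmx Remx_cmx Immx_cmx mul0mx subr0. Qed.

Lemma Immx_cmx_mulmx m n p (X : 'M[R]_(m, n)) (A : 'M[C]_(n, p)) :
  Immx (cmx X *m A) = X *m Immx A.
Proof. by rewrite Immx_mulmx Remx_cmx Immx_cmx mul0mx addr0. Qed.

Lemma Re_bil_cmx n (u : 'cV[C]_n) x : complex.Re (bil u (cmx x)) = dotr (Remx u) x.
Proof.
by rewrite /bil raddf_sum /=; apply: eq_bigr => j _; rewrite ReM !mxE /= mulr0 subr0.
Qed.

Lemma Im_bil_cmx n (u : 'cV[C]_n) x : complex.Im (bil u (cmx x)) = dotr (Immx u) x.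
Proof.
by rewrite /bil raddf_sum /=; apply: eq_bigr => j _; rewrite ImM !mxE /= mulr0 add0r.
Qed.

Lemma bil_mulmx n (M : 'M[C]_n) u v : bil (M *m u) v = bil u (M^T *m v).
Proof.
rewrite /bil; under eq_bigr => i _ do rewrite mxE mulr_suml.
under [RHS]eq_bigr => i _ do rewrite mxE mulr_sumr.
by rewrite exchange_big; apply: eq_bigr => i _; apply: eq_bigr => j _; rewrite mxE; ring.
Qed.

End RealImaginaryParts.

Section ComplexNorm.
Variable R : realType.
Local Notation C := (complex R).

Lemma sqr_cvnorm n (v : 'cV[C]_n) :
  cvnorm v ^+ 2 = rvnorm (Remx v) ^+ 2 + rvnorm (Immx v) ^+ 2.
Proof.
rewrite !sqr_rvnorm sqr_sqrtr; last first.
  by rewrite sumr_ge0 // => i _; rewrite addr_ge0 ?sqr_ge0.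
by rewrite -big_split; apply: eq_bigr => i _; rewrite !mxE.
Qed.

Lemma cvnorm_ge0 n (v : 'cV[C]_n) : 0 <= cvnorm v.
Proof. exact: sqrtr_ge0. Qed.

Lemma rvnorm_Remx_le n (v : 'cV[C]_n) : rvnorm (Remx v) <= cvnorm v.
Proof.
rewrite -(ler_pXn2r (n := 2)) ?nnegrE ?rvnorm_ge0 ?cvnorm_ge0 // sqr_cvnorm.
by rewrite lerDl sqr_ge0.
Qed.

Lemma rvnorm_Immx_le n (v : 'cV[C]_n) : rvnorm (Immx v) <= cvnorm v.
Proof.
rewrite -(ler_pXn2r (n := 2)) ?nnegrE ?rvnorm_ge0 ?cvnorm_ge0 // sqr_cvnorm.
by rewrite lerDr sqr_ge0.
Qed.

Lemma cvnorm_le n (v : 'cV[C]_n) : cvnorm v <= rvnorm (Remx v) + rvnorm (Immx v).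
Proof.
rewrite -(ler_pXn2r (n := 2)) ?nnegrE ?cvnorm_ge0 ?addr_ge0 ?rvnorm_ge0 // sqr_cvnorm.
have := rvnorm_ge0 (Remx v); have := rvnorm_ge0 (Immx v); nra.
Qed.

Lemma cvnorm_cmx n (x : 'cV[R]_n) : cvnorm (cmx x) = rvnorm x.
Proof.
apply/eqP; rewrite -(eqrXn2 (n := 2)) ?cvnorm_ge0 ?rvnorm_ge0 //.
by rewrite sqr_cvnorm Remx_cmx Immx_cmx rvnorm0 expr0n addr0.
Qed.

Lemma cvnorm0 n : cvnorm (0 : 'cV[C]_n) = 0.
Proof. by rewrite /cvnorm big1 ?sqrtr0 // => i _; rewrite mxE expr0n addr0. Qed.

Lemma cvnorm_gt0 n (v : 'cV[C]_n) : v != 0 -> 0 < cvnorm v.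
Proof.
apply: contra_neqT; rewrite -leNgt => v_le0; apply/matrixP => i j.
have Re0 : Remx v = 0.
  by apply/eqP; rewrite -rvnorm_eq0 eq_le rvnorm_ge0 (le_trans (rvnorm_Remx_le v)).
have Im0 : Immx v = 0.
  by apply/eqP; rewrite -rvnorm_eq0 eq_le rvnorm_ge0 (le_trans (rvnorm_Immx_le v)).
move/matrixP: Re0 => /(_ i j); move/matrixP: Im0 => /(_ i j).
by rewrite !mxE; case: (v i j) => a b /= -> ->.
Qed.

Lemma cvnormZ n (a : R) (v : 'cV[C]_n) : cvnorm (cR a *: v) = `|a| * cvnorm v.
Proof.
apply/eqP; rewrite -(eqrXn2 (n := 2)) ?cvnorm_ge0 ?mulr_ge0 ?cvnorm_ge0 //.
by rewrite exprMn !sqr_cvnorm RemxZ ImmxZ !rvnormZ !exprMn real_normK ?num_real // mulrDr.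
Qed.

Lemma cvnorm_normalize n (v : 'cV[C]_n) : v != 0 -> cvnorm (cR (cvnorm v)^-1 *: v) = 1.
Proof.
move/cvnorm_gt0 => v_gt0.
by rewrite cvnormZ ger0_norm ?invr_ge0 ?cvnorm_ge0 // mulVf ?gt_eqF.
Qed.

End ComplexNorm.

Section ComplexOperatorNorm.
Variables (R : realType) (m n : nat).
Hypothesis n_gt0 : (0 < n)%N.
Local Notation C := (complex R).
Implicit Types (A : 'M[C]_(m, n)) (u : 'cV[C]_n).

Lemma rvnorm_Remx_mulmx_le A u :
  rvnorm (Remx (A *m u)) <= (ropnorm (Remx A) + ropnorm (Immx A)) * cvnorm u.
Proof.
rewrite Remx_mulmx mulrDl; apply: le_trans (rvnormD _ _) _; rewrite rvnormN.
by rewrite lerD // (le_trans (ropnorm_ub _ _)) // ler_wpM2l ?ropnorm_ge0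
  ?rvnorm_Remx_le ?rvnorm_Immx_le.
Qed.

Lemma rvnorm_Immx_mulmx_le A u :
  rvnorm (Immx (A *m u)) <= (ropnorm (Remx A) + ropnorm (Immx A)) * cvnorm u.
Proof.
rewrite Immx_mulmx mulrDl; apply: le_trans (rvnormD _ _) _.
by rewrite lerD // (le_trans (ropnorm_ub _ _)) // ler_wpM2l ?ropnorm_ge0
  ?rvnorm_Remx_le ?rvnorm_Immx_le.
Qed.

Lemma copnorm_ub A u : cvnorm (A *m u) <= copnorm A * cvnorm u.
Proof.
have [->|u_neq0] := eqVneq u 0; first by rewrite mulmx0 !cvnorm0 mulr0.
have u_gt0 := cvnorm_gt0 u_neq0.
suff : cvnorm (A *m (cR (cvnorm u)^-1 *: u)) <= copnorm A.
  by rewrite -scalemxAr cvnormZ ger0_norm ?invr_ge0 ?cvnorm_ge0 // mulrC ler_pdivrMr.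
apply: ub_le_sup; last by exists (cR (cvnorm u)^-1 *: u); rewrite //= cvnorm_normalize.
exists ((ropnorm (Remx A) + ropnorm (Immx A)) *+ 2) => _ [w /= w1 <-].
apply: le_trans (cvnorm_le _) _.
by rewrite mulr2n lerD // -[leRHS]mulr1 -w1 (rvnorm_Remx_mulmx_le, rvnorm_Immx_mulmx_le).
Qed.

Lemma ropnorm_Remx_le A : ropnorm (Remx A) <= copnorm A.
Proof.
apply: ropnorm_le => // v; rewrite -Remx_mulmx_cmx -(cvnorm_cmx v).
exact: le_trans (rvnorm_Remx_le _) (copnorm_ub _ _).
Qed.

Lemma ropnorm_Immx_le A : ropnorm (Immx A) <= copnorm A.
Proof.
apply: ropnorm_le => // v; rewrite -Immx_mulmx_cmx -(cvnorm_cmx v).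
exact: le_trans (rvnorm_Immx_le _) (copnorm_ub _ _).
Qed.

Lemma copnorm_ge0 A : 0 <= copnorm A.
Proof. exact: le_trans (ropnorm_ge0 n_gt0 _) (ropnorm_Remx_le A). Qed.

End ComplexOperatorNorm.

Section Estimates.
Variables (R : realType) (n : nat).
Hypothesis n_gt0 : (0 < n)%N.
Local Notation C := (complex R).

Lemma Mplus_quadform (d : R) (B : 'M[C]_n) : B^T = B ->
  Mplus d B <-> forall x : 'cV[R]_n, x != 0 -> Nplus d (bil (B *m cmx x) (cmx x)).
Proof.
move=> BT_B; rewrite /Mplus /Nplus /=.
have formE (M : 'M[R]_n) x : (x^T *m M *m x) 0 0 = dotr (M *m x) x.
  by rewrite -mulmxA mxE; apply: eq_bigr => j _; rewrite mxE mulrC.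
have ReE x : complex.Re (bil (B *m cmx x) (cmx x)) = (x^T *m Remx B *m x) 0 0.
  by rewrite Re_bil_cmx Remx_mulmx_cmx formE.
have ImE x : complex.Im (bil (B *m cmx x) (cmx x)) = (x^T *m Immx B *m x) 0 0.
  by rewrite Im_bil_cmx Immx_mulmx_cmx formE.
have formD x : (x^T *m (d *: Remx B + Immx B) *m x) 0 0 =
    d * (x^T *m Remx B *m x) 0 0 + (x^T *m Immx B *m x) 0 0.
  by rewrite mulmxDr mulmxDl -scalemxAr -scalemxAl !mxE.
have formB x : (x^T *m (d *: Remx B - Immx B) *m x) 0 0 =
    d * (x^T *m Remx B *m x) 0 0 - (x^T *m Immx B *m x) 0 0.
  by rewrite mulmxBr mulmxBl -scalemxAr -scalemxAl !mxE.
split => [[_ [posD posB]] x x_neq0 | Nplus_x].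
  have := posD x x_neq0; have := posB x x_neq0; rewrite formD formB ReE ImE ltr_norml.
  by move=> ? ?; apply/andP; split; lra.
split=> //; split=> v /Nplus_x; rewrite ReE ImE ltr_norml => /andP[? ?].
  by rewrite formD; lra.
by rewrite formB; lra.
Qed.

Lemma Nplus_bil_self (e : R) (z : 'cV[C]_n) : 0 < e -> e <= 1/2 ->
  Vd e z -> Nplus (4 * e) (bil z z).
Proof.
rewrite /Vd /Nplus /= => e_gt0 e_le Vz.
have ReE : complex.Re (bil z z) = rvnorm (Remx z) ^+ 2 - rvnorm (Immx z) ^+ 2.
  rewrite /bil raddf_sum /= !sqr_rvnorm -sumrB.
  by apply: eq_bigr => j _; rewrite ReM !mxE !expr2.
have ImE : complex.Im (bil z z) = 2 * dotr (Remx z) (Immx z).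
  rewrite /bil raddf_sum /= /dotr mulr_sumr.
  by apply: eq_bigr => j _; rewrite ImM !mxE; ring.
rewrite ReE ImE normrM ger0_norm //.
have dot_le := normr_dotr_le (Remx z) (Immx z).
have y_ge0 := rvnorm_ge0 (Immx z).
set x := rvnorm (Remx z) in Vz dot_le *.
set y := rvnorm (Immx z) in Vz dot_le y_ge0 *.
have y2_le : y ^+ 2 <= e ^+ 2 * x ^+ 2 by rewrite -exprMn !expr2; nra.
have e2_le : e ^+ 2 <= 1/4 by rewrite expr2; nra.
have y2_le_x2 : y ^+ 2 <= 1/4 * x ^+ 2.
  by apply: le_trans y2_le _; apply: ler_wpM2r; rewrite ?sqr_ge0.
have : 0 <= e * (1/2 * x ^+ 2 - y ^+ 2).
  by apply: mulr_ge0; [exact: ltW | have := sqr_ge0 x; lra].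
nra.
Qed.

Lemma Vd_trmx_near1 (e : R) (p : 'M[C]_n) (w : 'cV[R]_n) :
  copnorm (p - 1%:M) < e -> e <= 1/2 -> w != 0 -> Vd (2 * e) (p^T *m cmx w).
Proof.
set E := p - 1%:M => E_lt e_le w_neq0; rewrite /Vd /=.
have -> : p = E + 1%:M by rewrite subrK.
rewrite Remx_mulmx_cmx Immx_mulmx_cmx Remx_trmx Immx_trmx RemxD ImmxD Remx1 Immx1.
rewrite addr0 linearD /= trmx1 mulmxDl mul1mx.
have Im_le : rvnorm ((Immx E)^T *m w) <= copnorm E * rvnorm w.
  rewrite (le_trans (ropnorm_trmx_ub n_gt0 _ _)) //.
  by rewrite ler_wpM2r ?rvnorm_ge0 ?ropnorm_Immx_le.
have Re_le : rvnorm ((Remx E)^T *m w) <= copnorm E * rvnorm w.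
  rewrite (le_trans (ropnorm_trmx_ub n_gt0 _ _)) //.
  by rewrite ler_wpM2r ?rvnorm_ge0 ?ropnorm_Remx_le.
set c := copnorm E in E_lt Im_le Re_le *; set W := rvnorm w in Im_le Re_le *.
have c_ge0 : 0 <= c := copnorm_ge0 n_gt0 E.
have W_gt0 : 0 < W by rewrite rvnorm_gt0.
have Re_ge : W - c * W <= rvnorm ((Remx E)^T *m w + w).
  by have := lerB_rvnormD w ((Remx E)^T *m w); rewrite [w + _]addrC -/W; lra.
have : 2 * e * (W - c * W) <= 2 * e * rvnorm ((Remx E)^T *m w + w).
  by apply: ler_wpM2l => //; lra.
have : c * W < e * W by rewrite ltr_pM2r.
have : 0 <= e * W * (1 - 2 * c) by apply: mulr_ge0; [apply: mulr_ge0 |]; lra.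
nra.
Qed.

Lemma Ed_trmx_real (e : R) (h : 'M[C]_n) (x : 'cV[R]_n) :
  e <= 1/2 -> Ed e h -> x != 0 -> Vd (2 * e) (h^T *m cmx x).
Proof.
move=> e_le [g [p [det_gt0 _ p_near1 ->]]] x_neq0.
rewrite trmx_mul -mulmxA -cmx_trmx -cmx_mulmx; apply: Vd_trmx_near1 => //.
have gT_unit : g^T \in unitmx by rewrite unitmxE unitfE det_tr gt_eqF.
by apply: contraNneq x_neq0 => gTx0; rewrite -(mulKmx gT_unit x) gTx0 mulmx0.
Qed.

Lemma Ed_mulmx_trmx (e : R) (h : 'M[C]_n) :
  0 < e -> e <= 1/4 -> Ed e h -> Mplus (8 * e) (h *m h^T).
Proof.
move=> e_gt0 e_le Eh; apply/Mplus_quadform; first by rewrite trmx_mul trmxK.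
move=> x x_neq0; rewrite -mulmxA bil_mulmx (_ : 8 * e = 4 * (2 * e)); last by ring.
by apply: Nplus_bil_self; [lra | lra | apply: Ed_trmx_real => //; lra].
Qed.

Lemma ropnorm_ReIm_mulmxr (A E : 'M[C]_n) :
  ropnorm (Remx (A *m E)) <= (ropnorm (Remx A) + ropnorm (Immx A)) * copnorm E /\
  ropnorm (Immx (A *m E)) <= (ropnorm (Remx A) + ropnorm (Immx A)) * copnorm E.
Proof.
have AE_le v : cvnorm (E *m cmx v) <= copnorm E * rvnorm v.
  by rewrite -(cvnorm_cmx v) copnorm_ub.
split; apply: ropnorm_le => // v;
  rewrite -?Remx_mulmx_cmx -?Immx_mulmx_cmx -mulmxA -mulrA;
  [apply: le_trans (rvnorm_Remx_mulmx_le n_gt0 _ _) _ |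
   apply: le_trans (rvnorm_Immx_mulmx_le n_gt0 _ _) _];
  by rewrite ler_wpM2l ?addr_ge0 ?ropnorm_ge0.
Qed.

Lemma ropnorm_ReIm_mulmxl (A E : 'M[C]_n) :
  ropnorm (Remx (E *m A)) <= copnorm E * (ropnorm (Remx A) + ropnorm (Immx A)) /\
  ropnorm (Immx (E *m A)) <= copnorm E * (ropnorm (Remx A) + ropnorm (Immx A)).
Proof.
have EA_le v : cvnorm (E *m (A *m cmx v)) <=
    copnorm E * (ropnorm (Remx A) + ropnorm (Immx A)) * rvnorm v.
  apply: le_trans (copnorm_ub n_gt0 _ _) _; rewrite -mulrA ler_wpM2l ?copnorm_ge0 //.
  apply: le_trans (cvnorm_le _) _; rewrite Remx_mulmx_cmx Immx_mulmx_cmx mulrDl.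
  by rewrite lerD ?ropnorm_ub.
split; apply: ropnorm_le => // v;
  rewrite -?Remx_mulmx_cmx -?Immx_mulmx_cmx -mulmxA;
  [apply: le_trans (rvnorm_Remx_le _) _ | apply: le_trans (rvnorm_Immx_le _) _];
  exact: EA_le.
Qed.

Lemma Md_add_small (e : R) (A P : 'M[C]_n) : 0 < e -> e <= 1/4 -> Md e A ->
  ropnorm (Remx P) <= (ropnorm (Remx A) + ropnorm (Immx A)) * e ->
  ropnorm (Immx P) <= (ropnorm (Remx A) + ropnorm (Immx A)) * e ->
  Md (4 * e) (A + P).
Proof.
rewrite /Md /= RemxD ImmxD => e_gt0 e_le MdA ReP_le ImP_le.
have Im_le := ropnormD n_gt0 (Immx A) (Immx P).
have Re_ge := ropnormD n_gt0 (Remx A + Remx P) (- Remx P).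
rewrite addrK ropnormN // in Re_ge.
have x_ge0 := ropnorm_ge0 n_gt0 (Remx A); have y_ge0 := ropnorm_ge0 n_gt0 (Immx A).
set x := ropnorm (Remx A) in MdA ReP_le ImP_le Re_ge x_ge0 *.
set y := ropnorm (Immx A) in MdA ReP_le ImP_le Im_le y_ge0 *.
set s := ropnorm (Remx A + Remx P) in Re_ge *.
(* [|Im (A + P)| < 9/4 e x] while [|Re (A + P)| >= 11/16 x]. *)
have ex_ge0 : 0 <= e * x by rewrite mulr_ge0 // ltW.
have : (x + y) * e <= 5/4 * (e * x).
  have : e * (e * x) <= 1/4 * (e * x) by apply: ler_wpM2r.
  nra.
have : 4 * e * (x - ropnorm (Remx P)) <= 4 * e * s by apply: ler_wpM2l => //; lra.
nra.
Qed.

Lemma Md_mulmx_near1 (e : R) (A B : 'M[C]_n) : 0 < e -> e <= 1/4 -> Md e A ->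
  copnorm (B - 1%:M) < e -> Md (4 * e) (A *m B) /\ Md (4 * e) (B *m A).
Proof.
move=> e_gt0 e_le MdA B_near1.
have K_ge0 : 0 <= ropnorm (Remx A) + ropnorm (Immx A) by rewrite addr_ge0 ?ropnorm_ge0.
have BE : B = 1%:M + (B - 1%:M) by rewrite addrC subrK.
have [ReAE_le ImAE_le] := ropnorm_ReIm_mulmxr A (B - 1%:M).
have [ReEA_le ImEA_le] := ropnorm_ReIm_mulmxl A (B - 1%:M).
split; rewrite BE.
  rewrite mulmxDr mulmx1; apply: Md_add_small => //.
    by apply: le_trans ReAE_le _; apply/ler_wpM2l/ltW.
  by apply: le_trans ImAE_le _; apply/ler_wpM2l/ltW.
rewrite mulmxDl mul1mx; apply: Md_add_small => //.
  by apply: le_trans ReEA_le _; rewrite mulrC; apply/ler_wpM2l/ltW.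
by apply: le_trans ImEA_le _; rewrite mulrC; apply/ler_wpM2l/ltW.
Qed.

Lemma Md_mulmx_orthogonal (e : R) (A : 'M[C]_n) (B : 'M[R]_n) : B^T *m B = 1%:M ->
  Md e A -> Md e (A *m cmx B) /\ Md e (cmx B *m A).
Proof.
rewrite /Md /= => BTB MdA.
rewrite Remx_mulmx_cmx Immx_mulmx_cmx Remx_cmx_mulmx Immx_cmx_mulmx.
rewrite (ropnorm_mulmx_orthogonal n_gt0 (Remx A)) //.
rewrite (ropnorm_mulmx_orthogonal n_gt0 (Immx A)) //.
by rewrite !(ropnorm_orthogonal_mulmx (m := n) n_gt0).
Qed.

Lemma Nplus_subset (e1 e2 : R) : 0 < e1 -> e1 <= e2 -> (Nplus e1 `<=` Nplus e2)%classic.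
Proof.
rewrite /Nplus => e1_gt0 e12 z /= z_in.
have Re_gt0 : 0 < complex.Re z.
  by rewrite -(pmulr_rgt0 _ e1_gt0) (le_lt_trans (normr_ge0 _) z_in).
by rewrite (lt_le_trans z_in) // ler_wpM2r // ltW.
Qed.

Lemma Vd_subset (e1 e2 : R) : e1 <= e2 -> (@Vd R n e1 `<=` @Vd R n e2)%classic.
Proof.
by rewrite /Vd => e12 z /= z_in; rewrite (lt_le_trans z_in) // ler_wpM2r ?rvnorm_ge0.
Qed.

Lemma Md_subset (e1 e2 : R) : e1 <= e2 -> (@Md R n e1 `<=` @Md R n e2)%classic.
Proof.
by rewrite /Md => e12 A /= A_in; rewrite (lt_le_trans A_in) // ler_wpM2r ?ropnorm_ge0.
Qed.

End Estimates.

Unset Implicit Arguments.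

Theorem lemma6p1 (R : realType) (n : nat) (hn : (1 <= n)%N) :
  exists (C d0 : R), 0 < C /\ 0 < d0 /\
  forall d : R, 0 < d -> d < d0 ->
  (
   (* (a) *)
   (forall B : 'M[complex R]_n, B^T = B ->
      (Mplus d B <-> forall x : 'cV[R]_n, x != 0 ->
                       Nplus d (bil (B *m cmx x) (cmx x)))) /\
   (* (b) *)
   (forall (h : 'M[complex R]_n) (x : 'cV[R]_n), Ed d h -> x != 0 ->
      Vd (C * d) (h^T *m cmx x)) /\
   (* (c) *)
   (forall z : 'cV[complex R]_n, Vd d z -> z != 0 -> Nplus (C * d) (bil z z)) /\
   (* (d) *)
   (forall h : 'M[complex R]_n, Ed d h -> Mplus (C * d) (h *m h^T)) /\
   (* (e) *)
   (forall A B : 'M[complex R]_n, Md d A -> copnorm (B - 1%:M) < d ->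
      Md (C * d) (A *m B) /\ Md (C * d) (B *m A)) /\
   (* (f) *)
   (forall (A : 'M[complex R]_n) (B : 'M[R]_n), Md d A -> SOn B ->
      Md (C * d) (A *m cmx B) /\ Md (C * d) (cmx B *m A))).
Proof.
exists 8, (1/4); do 2!(split; first by lra).
move=> d d_gt0 d_lt; have d_le : d <= 1/4 by lra.
split; first exact: Mplus_quadform.
split.
  move=> h x Eh x_neq0; apply: (Vd_subset (e1 := 2 * d)); first by lra.
  by apply: Ed_trmx_real => //; lra.
split.
  move=> z Vz _; apply: (Nplus_subset (e1 := 4 * d)); [lra | lra |].
  by apply: Nplus_bil_self => //; lra.
split; first by move=> h; exact: Ed_mulmx_trmx.
split.
  move=> A B MdA B_near1; have [] := Md_mulmx_near1 hn d_gt0 d_le MdA B_near1.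
  by split; apply: (Md_subset hn (e1 := 4 * d)) => //; lra.
move=> A B MdA [BTB _]; have [] := Md_mulmx_orthogonal hn BTB MdA.
by split; apply: (Md_subset hn (e1 := d)) => //; lra.
Qed.
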